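(* Let $\kappa$ be an infinite cardinal. If $G$ is a graph with at least $\kappa$ vertices and $G$ has no independent set of size $\kappa$, then $G$ is $(\kappa,\kappa)$-connected.
   Context: A graph is a pair $(V,E)$ with $E\subseteq[V]^2$; an independent set is a set of pairwise non-adjacent vertices. For infinite cardinals $\kappa,\lambda$, a graph is $(\kappa,\lambda)$-connected if after the removal of any set of fewer than $\kappa$ vertices, the number of connected components of the remaining graph is non-zero and less than $\lambda$. *)

From HB Require Import structures.
From mathcomp Require Import all_boot all_order.
From mathcomp Require Import boolp classical_sets cardinality.
From Stdlib Require Import Relation_Operators.

Set Implicit Arguments.
Unset Strict Implicit.
Unset Printing Implicit Defensive.

Local Open Scope classical_set_scope.
Local Open Scope card_scope.

(* A (simple) graph on vertex type V: edge relation symmetric and irreflexive,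
   i.e. E encodes a subset of [V]^2. *)
Definition is_graph (V : Type) (E : V -> V -> Prop) : Prop :=
  (forall x y, E x y -> E y x) /\ (forall x, ~ E x x).

Definition independent (V : Type) (E : V -> V -> Prop) (I : set V) : Prop :=
  forall x y, I x -> I y -> x <> y -> ~ E x y.

Definition card_lt (T U : Type) (A : set T) (B : set U) : Prop :=
  A #<= B /\ ~ (B #<= A).

Definition induced_edge (V : Type) (E : V -> V -> Prop) (R : set V) : V -> V -> Prop :=
  fun a b => R a /\ R b /\ E a b.

Definition conn (V : Type) (E : V -> V -> Prop) (R : set V) : V -> V -> Prop :=
  clos_refl_trans V (induced_edge E R).

Definition components (V : Type) (E : V -> V -> Prop) (R : set V) : set (set V) :=
  [set C | exists x, R x /\ C = [set y | conn E R x y]].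

(* (kappa, lambda)-connected, cardinals kappa, lambda given as |K|, |L| *)
Definition kl_connected (V : Type) (E : V -> V -> Prop) (K L : Type) : Prop :=
  forall S : set V, card_lt S [set: K] ->
    components E (~` S) !=set0 /\ card_lt (components E (~` S)) [set: L].

From mathcomp Require Import all_boot all_order.
From mathcomp Require Import boolp classical_sets cardinality.
From Stdlib Require Import Relation_Operators.

Set Implicit Arguments.
Unset Strict Implicit.
Unset Printing Implicit Defensive.

Local Open Scope classical_set_scope.
Local Open Scope card_scope.

(* Since |V| >= kappa, deleting fewer than kappa vertices leaves some vertex.
   One vertex chosen in each component of what remains gives an independent
   set, so there cannot be kappa components; by comparability of cardinals
   there are then fewer than kappa. *)

Section PartialBijection.
Variables (T U : Type) (A : set T) (B : set U).

Definition partial_bij (R : set (T * U)) : Prop :=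
  R `<=` A `*` B /\ forall p q, R p -> R q -> (p.1 = q.1 <-> p.2 = q.2).

Lemma partial_bij_card_eq R : partial_bij R -> fst @` R #= snd @` R.
Proof.
case=> _ Rinj.
have inj_fst : {in R &, injective fst}.
  move=> [x y] [x' y'] /[!inE] Rp Rq /= e.
  by congr pair; last exact: (proj1 (Rinj _ _ Rp Rq) e).
have inj_snd : {in R &, injective snd}.
  move=> [x y] [x' y'] /[!inE] Rp Rq /= e.
  by congr pair; first exact: (proj2 (Rinj _ _ Rp Rq) e).
exact: card_eq_trans (inj_card_eq inj_fst) (card_esym (inj_card_eq inj_snd)).
Qed.

Lemma partial_bij_setU1 R a b : partial_bij R -> A a -> B b ->
  ~ (fst @` R) a -> ~ (snd @` R) b -> partial_bij (R `|` [set (a, b)]).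
Proof.
move=> [RAB Rinj] Aa Bb Ra Rb; split; first by move=> p [/RAB|->].
have new_pair p : R p -> p.1 <> a /\ p.2 <> b.
  by move=> Rp; split=> e; [apply: Ra | apply: Rb]; exists p.
move=> p q [Rp|->] [Rq|->] //=; first exact: Rinj.
- by have [] := new_pair p Rp; split=> e; exfalso; auto.
- by have [] := new_pair q Rq; split=> e; exfalso; auto.
Qed.

Lemma exists_maximal_partial_bij :
  exists R, partial_bij R /\ forall R', R `<` R' -> ~ partial_bij R'.
Proof.
apply: (@Zorn_bigcup _ partial_bij) => F Fbij Ftot; split.
  by move=> p [X FX Xp]; exact: (proj1 (Fbij X FX)).
move=> p q [X FX Xp] [Y FY Yq].
have [XY|YX] := Ftot X Y FX FY.
  by apply: (proj2 (Fbij Y FY)) => //; exact: XY.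
by apply: (proj2 (Fbij X FX)) => //; exact: YX.
Qed.

End PartialBijection.

(* A maximal partial bijection between A and B is defined on all of A or onto all of B. *)
Lemma card_le_total T U (A : set T) (B : set U) : A #<= B \/ B #<= A.
Proof.
have [R [Rbij Rmax]] := exists_maximal_partial_bij A B.
have RAB := partial_bij_card_eq Rbij.
have [AR|/nonsubset [a [Aa Ra]]] := pselect (A `<=` fst @` R).
  left; apply: card_le_trans (subset_card_le AR) _.
  rewrite (card_le_eql RAB); apply: subset_card_le.
  by move=> _ [p /(proj1 Rbij) [_ ?] <-].
have [BR|/nonsubset [b [Bb Rb]]] := pselect (B `<=` snd @` R).
  right; apply: card_le_trans (subset_card_le BR) _.
  rewrite -(card_le_eql RAB); apply: subset_card_le.
  by move=> _ [p /(proj1 Rbij) [? _] <-].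
exfalso; apply: (Rmax (R `|` [set (a, b)])); last exact: partial_bij_setU1.
split; first by move=> p Rp; left.
by move=> /(_ (a, b) (or_intror erefl)) Rab; apply: Ra; exists (a, b).
Qed.

Lemma card_ltNge T U (A : set T) (B : set U) : card_lt A B <-> ~ (B #<= A).
Proof.
split=> [[]//|BA]; split=> //.
by have [|/BA] := card_le_total A B.
Qed.

Lemma image_transversal T U (f : T -> U) (A : set T) :
  exists2 X, X `<=` A & {in X &, injective f} /\ f @` X = f @` A.
Proof.
elim/Ppointed: T => T in f A *.
  by rewrite (empty_eq0 A); exists set0 => //; split=> // x y /set_mem.
pose pick y := get (fun x => A x /\ f x = y).
have pickP y : (f @` A) y -> A (pick y) /\ f (pick y) = y.
  by move=> [x Ax <-]; apply: (@getPex _ (fun x => A x /\ f x = _)); exists x.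
exists (pick @` (f @` A)); first by move=> _ [y /pickP [? _] <-].
split.
  move=> a b /set_mem [y Ay <-] /set_mem [y' Ay' <-] e.
  by rewrite -(pickP y Ay).2 -(pickP y' Ay').2 e.
apply/seteqP; split=> [_ [_ [y Ay <-] <-]|y Ay]; first by rewrite (pickP y Ay).2.
by exists (pick y); [exists y | exact: (pickP y Ay).2].
Qed.

Section Components.
Variables (V : Type) (E : V -> V -> Prop) (R : set V).
Hypothesis Esym : forall x y, E x y -> E y x.

Lemma conn_sym x y : conn E R x y -> conn E R y x.
Proof.
elim=> [a b [Ra [Rb Eab]] | a | a b c _ IHab _ IHbc].
- by apply: rt_step; split; [|split; [|apply: Esym]].
- exact: rt_refl.
- exact: rt_trans IHbc IHab.
Qed.

Lemma conn_classE x y : conn E R x y -> conn E R x = conn E R y.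
Proof.
move=> cxy; apply/seteqP; split=> z cz; first exact: rt_trans (conn_sym cxy) cz.
exact: rt_trans cxy cz.
Qed.

Lemma componentsE : components E R = conn E R @` R.
Proof.
by apply/seteqP; split=> C [x]; [move=> [Rx ->] | move=> Rx <-]; exists x.
Qed.

Lemma independent_card_components :
  exists2 I, independent E I & I #= components E R.
Proof.
have [X XR [Xinj XE]] := image_transversal (conn E R) R.
exists X; last by rewrite componentsE -XE card_esym // inj_card_eq.
move=> u v Xu Xv uv Euv; apply/uv/Xinj; rewrite ?inE //.
by apply: conn_classE; apply: rt_step; split; [exact: XR | split; [exact: XR|]].
Qed.

End Components.

Theorem mainTheorem8 (K : Type) (V : Type) (E : V -> V -> Prop) :
  infinite_set [set: K] ->
  is_graph E ->
  [set: K] #<= [set: V] ->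
  ~ (exists I : set V, independent E I /\ I #= [set: K]) ->
  kl_connected E K K.
Proof.
move=> _ [Esym _] KV noI S [_ KS].
have [x0 Sx0] : ~` S !=set0.
  apply: contra_notP KS => noS; apply: card_le_trans KV (subset_card_le _).
  by move=> x _; apply: contrapT => Sx; apply: noS; exists x.
split; first by exists (conn E (~` S) x0), x0.
apply/card_ltNge; have [I Iind IC] := independent_card_components (~` S) Esym.
rewrite -(card_le_eqr IC) => /card_subP [J JK JI].
by apply: noI; exists J; split=> // u v /JI Iu /JI Iv; apply: Iind.
Qed.
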